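(* Let $G$ be a graph whose $\operatorname{IR}$-graph $H=G(\operatorname{IR})$ is connected, and let $k\geq 3$. If $G$ has an $\operatorname{IR}(G)$-set $X$ containing $k$ vertices each of positive degree in $G[X]$, or containing $k$ vertices each having an $X$-external private neighbour, then $\operatorname{diam}(H)\geq k$.
   Context: All graphs are finite and simple. For $G=(V,E)$, $D\subseteq V$, $v\in D$: $\operatorname{PN}(v,D)=N[v]-N[D-\{v\}]$ and $\operatorname{EPN}(v,D)=\operatorname{PN}(v,D)-D$; elements of $\operatorname{EPN}(v,D)$ are the $D$-external private neighbours of $v$. $D$ is irredundant if $\operatorname{PN}(v,D)\neq\varnothing$ for all $v\in D$; $\operatorname{IR}(G)$ is the maximum size of an irredundant set; an $\operatorname{IR}(G)$-set is an irredundant set of that size. $G(\operatorname{IR})$ has the $\operatorname{IR}(G)$-sets as vertices, with $D\sim D'$ iff there exist $u\in D$, $v\in D'$ with $uv\in E(G)$ and $D'=(D-\{u\})\cup\{v\}$. *)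

(* A simple graph G = (T, e): e symmetric and irreflexive on a finType T. *)
From mathcomp Require Import all_boot.
Set Implicit Arguments. Unset Strict Implicit. Unset Printing Implicit Defensive.

Section Graph.
Variables (T : finType) (e : rel T).

Definition cnbhd (v : T) : {set T} := [set w | (w == v) || e v w].
Definition cnbhdS (S : {set T}) : {set T} := \bigcup_(v in S) cnbhd v.

Definition PN (v : T) (D : {set T}) : {set T} := cnbhd v :\: cnbhdS (D :\ v).
Definition EPN (v : T) (D : {set T}) : {set T} := PN v D :\: D.

Definition irredundant (D : {set T}) : bool := [forall v in D, PN v D != set0].

Definition IRnum : nat := \max_(D : {set T} | irredundant D) #|D|.

Definition IRset (D : {set T}) : bool := irredundant D && (#|D| == IRnum).

Definition IRadj : rel {set T} := fun D D' =>
  [&& IRset D, IRset D' &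
   [exists u in D, exists v in D', e u v && (D' == (D :\ u) :|: [set v])]].

Definition IRgraph_connected : Prop :=
  forall D D', IRset D -> IRset D' -> connect IRadj D D'.

Fixpoint ball (n : nat) (D : {set {set T}}) : {set {set T}} :=
  match n with
  | 0 => D
  | n'.+1 => ball n' D :|: [set D' | [exists D0 in ball n' D, IRadj D0 D']]
  end.

(* distance in G(IR); correct whenever D' is reachable from D, since any
   shortest path has fewer than #|{set T}| edges *)
Definition IRdist (D D' : {set T}) : nat :=
  find (fun n => D' \in ball n [set D]) (iota 0 #|{set T}|).

Definition IRdiam : nat :=
  \max_(D : {set T} | IRset D) \max_(D' : {set T} | IRset D') IRdist D D'.

End Graph.

(** Let M be the set of vertices of X with an X-external private neighbour.
    A vertex of X with a neighbour in X is not its own private neighbour, so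
    it lies in M; the vertices of X outside M are isolated in G[X].
    Replacing every x in M by one of its external private neighbours gives an
    irredundant set Y of the same size: each x in M becomes a private
    neighbour of its replacement, and the isolated vertices stay their own
    private neighbours.  An edge of G(IR) exchanges a single vertex, so
    dist(X, Y) >= |X \ Y| >= |M| >= k. *)

From mathcomp Require Import all_boot.

Section PrivateNeighbours.
Local Set Implicit Arguments. Local Unset Strict Implicit.
Variables (T : finType) (e : rel T).

Lemma PNP v (D : {set T}) w :
  reflect ((w == v) || e v w /\
           forall u, u \in D -> u != v -> ~~ ((w == u) || e u w))
          (w \in PN e v D).
Proof.
rewrite /PN inE andbC inE.
apply: (iffP andP) => [[wv notN]|[wv notN]]; split => //.
- move=> u uD uv; apply/negP => wu; move/negP: notN; apply.
  by apply/bigcupP; exists u; rewrite !inE ?uv ?uD.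
- apply/negP => /bigcupP[u]; rewrite !inE => /andP[uv uD].
  by apply/negP; apply: notN.
Qed.

Lemma PN_mem_eq v (D : {set T}) w : w \in PN e v D -> w \in D -> w = v.
Proof.
move=> /PNP[_ notN] wD; apply/eqP; apply: contraT => wv.
by have := notN w wD wv; rewrite eqxx.
Qed.

Lemma irredundant_PN (D : {set T}) v :
  irredundant e D -> v \in D -> exists w, w \in PN e v D.
Proof. by move=> /forallP/(_ v)/implyP Dirr /Dirr/set0Pn. Qed.

Lemma EPN_adj v (D : {set T}) w : v \in D -> w \in EPN e v D -> e v w.
Proof.
move=> vD; rewrite inE => /andP[wD /PNP[/orP[/eqP wv|//] _]].
by rewrite wv vD in wD.
Qed.

Lemma self_PN_of_EPN_eq0 (D : {set T}) z :
  irredundant e D -> z \in D -> EPN e z D = set0 -> z \in PN e z D.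
Proof.
move=> Dirr zD EPN0; have [w wPN] := irredundant_PN Dirr zD.
have wD : w \in D.
  by apply: contraT => wD; rewrite -(in_set0 w) -EPN0 inE wD wPN.
by rewrite -[X in X \in _](PN_mem_eq wPN wD).
Qed.

Hypotheses (esym : symmetric e) (eirr : irreflexive e).

Lemma EPN_neq0_of_adj (D : {set T}) x y :
  irredundant e D -> x \in D -> y \in D -> e x y -> EPN e x D != set0.
Proof.
move=> Dirr xD yD exy; apply/set0Pn.
have [w wPN] := irredundant_PN Dirr xD.
exists w; rewrite inE wPN andbT; apply/negP => /(PN_mem_eq wPN) wx.
move: wPN; rewrite wx => /PNP[_ /(_ y yD)].
have yx : y != x by apply: contraTneq exy => ->; rewrite eirr.
by rewrite esym exy orbT => /(_ yx).
Qed.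

Definition epn_verts (D : {set T}) : {set T} := [set x in D | EPN e x D != set0].

Lemma adj_sub_epn_verts (D S : {set T}) :
  irredundant e D -> S \subset D ->
  (forall x, x \in S -> exists2 y, y \in D & e x y) -> S \subset epn_verts D.
Proof.
move=> Dirr SD adj; apply/subsetP => x xS; have xD := subsetP SD x xS.
have [y yD exy] := adj x xS.
by rewrite inE xD (EPN_neq0_of_adj Dirr xD yD exy).
Qed.

Lemma EPN_sub_epn_verts (D S : {set T}) :
  S \subset D -> (forall x, x \in S -> EPN e x D != set0) ->
  S \subset epn_verts D.
Proof.
by move=> SD hS; apply/subsetP => x xS; rewrite inE (subsetP SD) ?hS.
Qed.

Section Swap.
Variables (X M : {set T}) (f : T -> T).
Hypotheses (MX : M \subset X)
  (f_EPN : forall x, x \in M -> f x \in EPN e x X)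
  (self_PN : forall z, z \in X :\: M -> z \in PN e z X).

Local Notation Y := ((X :\: M) :|: f @: M).

Lemma swap_notin x : x \in M -> f x \notin X.
Proof. by move=> /f_EPN; rewrite inE => /andP[]. Qed.

Lemma swap_adj x : x \in M -> e x (f x).
Proof. by move=> xM; apply: EPN_adj (subsetP MX x xM) (f_EPN xM). Qed.

Lemma swap_private x u :
  x \in M -> u \in X -> u != x -> (f x != u) && ~~ e u (f x).
Proof.
move=> xM uX ux; have := f_EPN xM; rewrite inE => /andP[_ /PNP[_ notN]].
by rewrite -negb_or notN.
Qed.

Lemma swap_inj : {in M &, injective f}.
Proof.
move=> x1 x2 x1M x2M fx12; apply/eqP; apply: contraT => x12.
have := swap_private x1M (subsetP MX x2 x2M); rewrite eq_sym => /(_ x12).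
by rewrite fx12 swap_adj ?andbF.
Qed.

Lemma card_swap : #|Y| = #|X|.
Proof.
have disj : (X :\: M) :&: f @: M = set0.
  apply/setP => w; rewrite !inE; apply/negP => /andP[/andP[_ wX] /imsetP[x xM wfx]].
  by move: wX; rewrite wfx (negbTE (swap_notin xM)).
rewrite cardsU disj cards0 subn0 (card_in_imset swap_inj).
by rewrite cardsD (setIidPr MX) subnK // subset_leq_card.
Qed.

Lemma sub_setD_swap : M \subset X :\: Y.
Proof.
apply/subsetP => x xM; have xX := subsetP MX x xM.
rewrite !inE xX xM andbT; apply/imsetP => -[x' x'M xfx'].
by move: (swap_notin x'M); rewrite -xfx' xX.
Qed.

Lemma irredundant_swap : irredundant e Y.
Proof.
apply/forallP => y; apply/implyP; rewrite inE.
case/orP=> [yXM|/imsetP[x xM ->]]; apply/set0Pn.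
  exists y; apply/PNP; split; first by rewrite eqxx.
  move=> u; rewrite inE => /orP[uXM uy|/imsetP[x xM ->] _].
    have /PNP[_ /(_ u)] := self_PN yXM.
    by apply=> //; case/setDP: uXM.
  move: yXM; rewrite inE => /andP[yM yX].
  have yx : y != x by apply: contraNneq yM => ->.
  by have /andP[fy nfy] := swap_private xM yX yx; rewrite negb_or eq_sym fy esym.
have xX := subsetP MX x xM.
exists x; apply/PNP; split; first by rewrite esym swap_adj ?orbT.
move=> u; rewrite inE => /orP[uXM _|/imsetP[x' x'M ->] fx'x].
  have [uX uM] := setDP uXM.
  have xu : x != u by apply: contraNneq uM => <-.
  have /PNP[_ /(_ x xX xu)] := self_PN uXM.
  by rewrite !negb_or eq_sym esym.
have xx' : x != x' by apply: contraNneq fx'x => ->.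
by have /andP[fx' nfx'] := swap_private x'M xX xx'; rewrite negb_or eq_sym fx' esym.
Qed.

End Swap.

Definition epn_choice (D : {set T}) (x : T) : T := odflt x [pick w in EPN e x D].

Lemma epn_choiceP (D : {set T}) x : x \in epn_verts D -> epn_choice D x \in EPN e x D.
Proof.
rewrite inE => /andP[_ /set0Pn[w wEPN]].
by rewrite /epn_choice; case: pickP => [w' -> // | /(_ w)]; rewrite wEPN.
Qed.

Lemma IRset_away_from_epn_verts (X : {set T}) :
  IRset e X -> exists2 Y, IRset e Y & epn_verts X \subset X :\: Y.
Proof.
move=> /andP[Xirr /eqP cardX].
have MX : epn_verts X \subset X by apply/subsetP => x; rewrite inE => /andP[].
have self_PN z : z \in X :\: epn_verts X -> z \in PN e z X.
  move=> /setDP[zX zM]; apply: self_PN_of_EPN_eq0 => //.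
  by apply/eqP; move: zM; rewrite inE zX negbK.
have f_EPN := @epn_choiceP X.
exists ((X :\: epn_verts X) :|: epn_choice X @: epn_verts X).
  by rewrite /IRset irredundant_swap // card_swap // cardX eqxx.
exact: sub_setD_swap.
Qed.

End PrivateNeighbours.

Section Distance.
Local Set Implicit Arguments. Local Unset Strict Implicit.
Variables (T : finType) (e : rel T).

Lemma card_setD_ball (X : {set T}) n (D : {set T}) :
  D \in ball e n [set X] -> #|X :\: D| <= n.
Proof.
elim: n D => [|n IHn] D /=; first by rewrite inE => /eqP ->; rewrite setDv cards0.
rewrite inE => /orP[/IHn/leqW // |].
rewrite inE => /existsP[D0 /andP[D0ball /and3P[_ _ /existsP[u /andP[uD0
   /existsP[v /andP[_ /andP[_ /eqP ->]]]]]]]].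
have sub : X :\: (D0 :\ u :|: [set v]) \subset (X :\: D0) :|: [set u].
  apply/subsetP => x; rewrite !inE.
  by case: (x == u); case: (x \in D0); case: (x \in X); case: (x == v).
apply: leq_trans (subset_leq_card sub) (leq_trans (leq_card_setU _ _).1 _).
by rewrite cards1 addn1 ltnS IHn.
Qed.

Lemma card_setD_le_IRdist (X Y : {set T}) : #|X :\: Y| <= IRdist e X Y.
Proof.
rewrite /IRdist; set p := fun n => Y \in ball e n [set X].
have [p_reached|p_never] := boolP (has p (iota 0 #|{set T}|)).
  have := nth_find 0 p_reached.
  rewrite nth_iota ?add0n; first exact: card_setD_ball.
  by move: p_reached; rewrite has_find size_iota.
rewrite (hasNfind p_never) size_iota.
apply: leq_trans (max_card _) (leq_trans (ltnW (ltn_expl _ (isT : 1 < 2))) _).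
by rewrite -cardsT -(card_powerset [set: T]) max_card.
Qed.

Lemma IRdist_le_IRdiam (X Y : {set T}) :
  IRset e X -> IRset e Y -> IRdist e X Y <= IRdiam e.
Proof.
move=> XIR YIR; apply: leq_trans (leq_bigmax_cond (F := IRdist e X) Y YIR) _.
exact: (leq_bigmax_cond (F := fun D => \max_(D' | IRset e D') IRdist e D D') X XIR).
Qed.

End Distance.

Theorem corollary4p4 (T : finType) (e : rel T) (esym : symmetric e)
  (eirr : irreflexive e) (k : nat) (X : {set T}) :
  IRgraph_connected e -> 3 <= k -> IRset e X ->
  ((exists S : {set T}, [/\ S \subset X, #|S| = k &
        forall x, x \in S -> exists2 y, y \in X & e x y])
   \/ (exists S : {set T}, [/\ S \subset X, #|S| = k &
        forall x, x \in S -> EPN e x X != set0])) ->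
  k <= IRdiam e.
Proof.
move=> _ _ XIR hS.
have [S SM <-] : exists2 S : {set T}, S \subset epn_verts e X & #|S| = k.
  have Xirr : irredundant e X by case/andP: XIR.
  case: hS => -[S [SX cardS hS]]; exists S => //.
    exact: adj_sub_epn_verts.
  exact: EPN_sub_epn_verts.
have [Y YIR MXY] := IRset_away_from_epn_verts esym XIR.
apply: leq_trans (subset_leq_card SM) _.
apply: leq_trans (subset_leq_card MXY) _.
exact: leq_trans (card_setD_le_IRdist e X Y) (IRdist_le_IRdiam XIR YIR).
Qed.
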